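(* Let $\epsilon>0$. Define the randomized mechanism $\mathcal{M}$ (the BiSample mechanism) with input $v\in[-1,1]$ as follows: sample $s\in\{0,1\}$ uniformly at random; if $s=0$, generate a Bernoulli variable $b\in\{0,1\}$ with $$\Pr[b=1]=\frac{1-e^{\epsilon}}{1+e^{\epsilon}}\cdot\frac{v}{2}+\frac12;$$ if $s=1$, generate a Bernoulli variable $b\in\{0,1\}$ with $$\Pr[b=1]=\frac{e^{\epsilon}-1}{e^{\epsilon}+1}\cdot\frac{v}{2}+\frac12;$$ and output the pair $\langle s,b\rangle$. Then $\mathcal{M}$ satisfies $\epsilon$-local differential privacy, i.e. for all $t_1,t_2\in[-1,1]$ and every output $o\in\{0,1\}\times\{0,1\}$, $$\Pr[\mathcal{M}(t_1)=o]\le e^{\epsilon}\cdot\Pr[\mathcal{M}(t_2)=o].$$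
   Context: A randomized mechanism $\mathcal{M}$ satisfies $\epsilon$-local differential privacy ($\epsilon$-LDP) if for every two inputs $t_1,t_2$ in its domain and every output $t^*$ in its range, $\Pr[\mathcal{M}(t_1)=t^*]\le \exp(\epsilon)\Pr[\mathcal{M}(t_2)=t^*]$. *)

From Stdlib Require Import Reals.
Open Scope R_scope.

Definition bisample_p1 (eps v : R) (s : bool) : R :=
  if s then (exp eps - 1) / (exp eps + 1) * (v / 2) + 1 / 2
  else (1 - exp eps) / (1 + exp eps) * (v / 2) + 1 / 2.

(* Output distribution of the BiSample mechanism on input v:
   Pr[M(v) = <s,b>] = Pr[s] * Pr[b | s], with s uniform on {0,1}.
   Bits are encoded as bool (false = 0, true = 1). *)
Definition bisample_prob (eps v : R) (o : bool * bool) : R :=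
  let (s, b) := o in
  (1 / 2) * (if b then bisample_p1 eps v s else 1 - bisample_p1 eps v s).

(* Every output of BiSample has probability between 1 / (2 (e^eps + 1)) and
   e^eps / (2 (e^eps + 1)): the Bernoulli parameter is 1/2 +- c v / 2 with
   c = (e^eps - 1) / (e^eps + 1), and |v| <= 1.  Any two numbers in an
   interval [m, e^eps m] have ratio at most e^eps. *)
From Stdlib Require Import Reals Lra.
Open Scope R_scope.

Lemma bisample_p1_bounds (eps v : R) (s : bool) :
  0 <= eps -> -1 <= v <= 1 ->
  / (exp eps + 1) <= bisample_p1 eps v s <= exp eps / (exp eps + 1).
Proof.
  intros Heps Hv.
  assert (HE : 1 <= exp eps) by (pose proof (exp_ineq1_le eps); lra).
  set (c := (exp eps - 1) / (exp eps + 1)).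
  assert (Hc : 0 <= c).
  { apply Rmult_le_pos; [lra | left; apply Rinv_0_lt_compat; lra]. }
  assert (Hlo : / (exp eps + 1) = 1 / 2 - c / 2) by (unfold c; field; lra).
  assert (Hhi : exp eps / (exp eps + 1) = 1 / 2 + c / 2) by (unfold c; field; lra).
  assert (Hneg : (1 - exp eps) / (1 + exp eps) = - c) by (unfold c; field; lra).
  unfold bisample_p1; rewrite Hlo, Hhi.
  destruct s; [fold c | rewrite Hneg]; split; nra.
Qed.

Lemma bisample_prob_bounds (eps v : R) (o : bool * bool) :
  0 <= eps -> -1 <= v <= 1 ->
  / (2 * (exp eps + 1)) <= bisample_prob eps v o <= exp eps / (2 * (exp eps + 1)).
Proof.
  intros Heps Hv.
  destruct o as [s b].
  assert (HE : 1 <= exp eps) by (pose proof (exp_ineq1_le eps); lra).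
  pose proof (bisample_p1_bounds eps v s Heps Hv) as Hp.
  assert (Hlo : / (2 * (exp eps + 1)) = 1 / 2 * / (exp eps + 1)) by (field; lra).
  assert (Hhi : exp eps / (2 * (exp eps + 1)) = 1 / 2 * (exp eps / (exp eps + 1)))
    by (field; lra).
  assert (Hsum : / (exp eps + 1) + exp eps / (exp eps + 1) = 1) by (field; lra).
  unfold bisample_prob; rewrite Hlo, Hhi.
  destruct b; split; lra.
Qed.

Lemma le_mul_of_interval (m k x y : R) :
  0 <= k -> x <= k * m -> m <= y -> x <= k * y.
Proof. intros Hk Hx Hy; nra. Qed.

Theorem theorem1 (eps : R) (heps : 0 < eps) :
  forall t1 t2 : R, -1 <= t1 <= 1 -> -1 <= t2 <= 1 ->
  forall o : bool * bool,
    bisample_prob eps t1 o <= exp eps * bisample_prob eps t2 o.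
Proof.
  intros t1 t2 H1 H2 o.
  pose proof (bisample_prob_bounds eps t1 o (Rlt_le _ _ heps) H1) as [_ Hx].
  pose proof (bisample_prob_bounds eps t2 o (Rlt_le _ _ heps) H2) as [Hy _].
  exact (le_mul_of_interval _ _ _ _ (Rlt_le _ _ (exp_pos eps)) Hx Hy).
Qed.
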